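(* Let $\mathbf{b}=(b_n)_{n\in\mathbb{N}_0}$ be a $D$-sequence with $\frac{b_{n+1}}{b_n}\to\infty$. Then $$(\mathbb{Z},\tau_{\mathbf{b}})^\wedge=\Big\langle\Big\{\tfrac{1}{b_n}+\mathbb{Z}: n\in\mathbb{N}\Big\}\Big\rangle=(\mathbb{Z},\lambda_{\mathbf{b}})^\wedge,$$ where a character $\chi$ of $\mathbb{Z}$ is identified with $\chi(1)\in\mathbb{T}$; that is, a homomorphism $\chi:\mathbb{Z}\to\mathbb{T}$ is $\tau_{\mathbf{b}}$-continuous if and only if it is $\lambda_{\mathbf{b}}$-continuous, if and only if $\chi(1)=\frac{a}{b_n}+\mathbb{Z}$ for some $a\in\mathbb{Z}$, $n\in\mathbb{N}$.
   Context: $\mathbb{T}=\mathbb{R}/\mathbb{Z}$; $\mathbb{T}_m=[-\frac{1}{4m},\frac{1}{4m}]+\mathbb{Z}$. For a topological abelian group $G$, $G^\wedge$ is the group of continuous homomorphisms $G\to\mathbb{T}$. A $D$-sequence is a sequence $\mathbf{b}=(b_n)_{n\in\mathbb{N}_0}$ of natural numbers with $b_0=1$, $b_n\mid b_{n+1}$, $b_n\neq b_{n+1}$. $\lambda_{\mathbf{b}}$ is the group topology on $\mathbb{Z}$ with neighborhood basis $\{b_n\mathbb{Z}\}_{n\in\mathbb{N}_0}$ at $0$. $\tau_{\mathbf{b}}$ is the group topology on $\mathbb{Z}$ with neighborhood basis at $0$ given by $V_{\mathbf{b},m}=\{k\in\mathbb{Z}: \frac{k}{b_n}+\mathbb{Z}\in\mathbb{T}_m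 \text{ for all } n\in\mathbb{N}\}$, $m\in\mathbb{N}$. *)

From Stdlib Require Import Reals ZArith.
Open Scope R_scope.

(* The circle group T = R/Z: a real x represents the class x + Z. *)
Definition near0_T (eps x : R) : Prop :=
  exists z : Z, Rabs (x - IZR z) < eps.

Definition in_Tm (m : nat) (x : R) : Prop :=
  exists z : Z, Rabs (x - IZR z) <= / (4 * INR m).

Definition D_sequence (b : nat -> nat) : Prop :=
  b 0%nat = 1%nat /\
  (forall n, (0 < b n)%nat) /\
  (forall n, Nat.divide (b n) (b (S n))) /\
  (forall n, b n <> b (S n)).

Definition ratio_to_infty (b : nat -> nat) : Prop :=
  forall M : R, exists N : nat, forall n : nat, (N <= n)%nat ->
    INR (b (S n)) / INR (b n) > M.

(* Basic neighbourhoods of 0 in lambda_b : b_n Z, n in N_0. *)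
Definition lambda_nbhd (b : nat -> nat) (n : nat) (k : Z) : Prop :=
  exists q : Z, k = (Z.of_nat (b n) * q)%Z.

(* Basic neighbourhoods of 0 in tau_b : V_{b,m}, m in N (m >= 1). *)
Definition V_bm (b : nat -> nat) (m : nat) (k : Z) : Prop :=
  forall n : nat, (1 <= n)%nat -> in_Tm m (IZR k / INR (b n)).

Definition chi (theta : R) (k : Z) : R := IZR k * theta.

(* Continuity of chi (at every point k) for the group topology on Z whose
   neighbourhoods of k are the translates k + V, V a basic neighbourhood of 0,
   with the neighbourhood basis of 0 given by a family (nb i)_{i : I}. *)
Definition continuous_wrt {I : Type} (nb : I -> Z -> Prop) (theta : R) : Prop :=
  forall (k : Z) (eps : R), 0 < eps ->
    exists i : I, forall v : Z, nb i v ->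
      near0_T eps (chi theta (k + v) - chi theta k).

Definition lambda_continuous (b : nat -> nat) (theta : R) : Prop :=
  continuous_wrt (lambda_nbhd b) theta.

(* index m of V_{b,m} ranges over N = {1,2,...}: encode m = S j *)
Definition tau_continuous (b : nat -> nat) (theta : R) : Prop :=
  continuous_wrt (fun j : nat => V_bm b (S j)) theta.

From Stdlib Require Import Reals ZArith Lra Lia Classical.
Open Scope R_scope.

(* A character chi of Z is determined by theta = chi(1); it is continuous for
   one of the group topologies iff it is continuous at 0.  We show the three
   conditions of the theorem are linked by

     b-rational  ->  tau_b-continuous  ->  b-rational  <->  lambda_b-continuous,

   where theta is b-rational when theta = a/b_n mod Z.
   - A b-rational theta gives characters trivial on b_n Z (lambda_b) and only
     moving V_{b,m} by |a|/(4m) (tau_b).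
   - lambda_b-continuity forces all multiples of x = b_n theta to stay within
     1/4 of Z, which makes x an integer.
   - For tau_b the argument is by contradiction.  If no b_n theta is an integer,
     the residuals e_n of b_n theta (distances to the nearest integer) cannot
     satisfy (b_{n+1}/b_n) |e_n| < 1/4 for all large n, since then they would
     not decrease while b_{n+1}/b_n -> oo.  At such an index n, a small multiple
     t b_n lies in V_{b,m} and moves theta by an amount in [1/(64m), 1/2] mod Z.
     Adding about 16m such terms at rapidly increasing indices yields v in
     V_{b,m} with v theta at distance >= 1/4 from Z, against continuity. *)

Definition nearest (x : R) : Z := (up (x + /2) - 1)%Z.
Definition residual (x : R) : R := x - IZR (nearest x).

Lemma residual_bound (x : R) : Rabs (residual x) <= /2.
Proof.
  unfold residual, nearest. destruct (archimed (x + /2)) as [H1 H2].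
  rewrite minus_IZR. apply Rabs_le. simpl. lra.
Qed.

Lemma int_abs_lt1 (z : Z) : Rabs (IZR z) < 1 -> z = 0%Z.
Proof.
  intro H. apply Rabs_def2 in H. destruct H as [H1 H2].
  change (-(1)) with (IZR (-1)) in H2.
  apply lt_IZR in H1. apply lt_IZR in H2. lia.
Qed.

Lemma near0_T_shift (eps y : R) (z : Z) :
  near0_T eps y -> near0_T eps (y + IZR z).
Proof.
  intros [w Hw]. exists (w + z)%Z. rewrite plus_IZR.
  replace (y + IZR z - (IZR w + IZR z)) with (y - IZR w) by ring. exact Hw.
Qed.

Lemma near0_T_int (eps : R) (z : Z) : 0 < eps -> near0_T eps (IZR z).
Proof.
  intro He. exists z. rewrite Rminus_diag, Rabs_R0. exact He.
Qed.

Lemma near0_quarter_small (y : R) :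
  Rabs y < 3/4 -> near0_T (/4) y -> Rabs y < /4.
Proof.
  intros Hy [w Hw].
  assert (Hw1 : Rabs (IZR w) < 1).
  { replace (IZR w) with (y - (y - IZR w)) by ring.
    eapply Rle_lt_trans; [apply Rabs_triang|]. rewrite Rabs_Ropp. lra. }
  apply int_abs_lt1 in Hw1. subst w. rewrite Rminus_0_r in Hw. exact Hw.
Qed.

Lemma not_near0_quarter (s : R) (z : Z) :
  /4 <= s <= 3/4 -> ~ near0_T (/4) (s + IZR z).
Proof.
  intros Hs [w Hw].
  replace (s + IZR z - IZR w) with (s + IZR (z - w)) in Hw by (rewrite minus_IZR; ring).
  destruct (Z_le_gt_dec 0 (z - w)) as [Hle | Hgt].
  - apply IZR_le in Hle. pose proof (Rle_abs (s + IZR (z - w))). lra.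
  - assert (IZR (z - w) <= -1) by (apply (IZR_le _ (-1)); lia).
    pose proof (Rle_abs (- (s + IZR (z - w)))). rewrite Rabs_Ropp in *. lra.
Qed.

Lemma archimedean_nat (r : R) : exists t : nat, r < INR t.
Proof.
  exists (Z.to_nat (up r)). destruct (archimed r) as [H _].
  destruct (Z_le_gt_dec 0 (up r)).
  - rewrite INR_IZR_INZ, Z2Nat.id by lia. exact H.
  - assert (IZR (up r) < 0) by (apply IZR_lt; lia). pose proof (pos_INR (Z.to_nat (up r))). lra.
Qed.

Lemma ceiling_multiple (alpha y : R) : 0 < alpha -> 0 < y ->
  exists t : nat, (1 <= t)%nat /\ alpha <= INR t * y <= alpha + y.
Proof.
  intros Ha Hy. set (r := alpha / y).
  assert (Hr : 0 < r) by (unfold r; apply Rdiv_lt_0_compat; lra).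
  destruct (archimed r) as [H1 H2].
  assert (Hu : (0 < up r)%Z) by (apply lt_IZR; simpl; lra).
  exists (Z.to_nat (up r)). rewrite INR_IZR_INZ, Z2Nat.id by lia. split; [lia|].
  assert (Hry : r * y = alpha) by (unfold r; field; lra). split; nra.
Qed.

Lemma residual_mul (k : nat) (x : R) :
  Rabs (INR k * residual x) < /2 -> residual (INR k * x) = INR k * residual x.
Proof.
  intro Hk.
  set (w := (Z.of_nat k * nearest x - nearest (INR k * x))%Z).
  assert (Hw : residual (INR k * x) - INR k * residual x = IZR w).
  { unfold w, residual. rewrite minus_IZR, mult_IZR, <- INR_IZR_INZ. ring. }
  assert (Hw1 : Rabs (IZR w) < 1).
  { rewrite <- Hw. pose proof (residual_bound (INR k * x)).
    unfold Rminus. eapply Rle_lt_trans; [apply Rabs_triang|]. rewrite Rabs_Ropp. lra. }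
  apply int_abs_lt1 in Hw1. rewrite Hw1 in Hw. simpl in Hw. lra.
Qed.

(* A real whose integer multiples all lie within 1/4 of Z is an integer:
   the multiples of its residual stay in (-1/4, 1/4), forcing the residual to be 0. *)
Lemma multiples_near0_integer (x : R) :
  (forall q : Z, near0_T (/4) (IZR q * x)) -> residual x = 0.
Proof.
  intro Hq. set (e := residual x).
  assert (He : forall q : Z, near0_T (/4) (IZR q * e)).
  { intro q. replace (IZR q * e) with (IZR q * x + IZR (- (q * nearest x))).
    - apply near0_T_shift, Hq.
    - unfold e, residual. rewrite opp_IZR, mult_IZR. ring. }
  assert (Hsmall : forall t : nat, Rabs (INR t * e) < /4).
  { induction t as [|t IH].
    - rewrite Rmult_0_l, Rabs_R0. lra.
    - pose proof (residual_bound x) as Hb. fold e in Hb.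
      apply near0_quarter_small; [|rewrite INR_IZR_INZ; apply He].
      rewrite S_INR, Rmult_plus_distr_r, Rmult_1_l.
      eapply Rle_lt_trans; [apply Rabs_triang|]. lra. }
  destruct (Req_dec e 0) as [|Hne]; [assumption|exfalso].
  assert (Hpos : 0 < Rabs e) by (apply Rabs_pos_lt; exact Hne).
  destruct (archimedean_nat (/ (4 * Rabs e))) as [t Ht].
  specialize (Hsmall t). rewrite Rabs_mult, Rabs_pos_eq in Hsmall by apply pos_INR.
  assert (/ (4 * Rabs e) * Rabs e = /4) by (field; lra).
  nra.
Qed.

(* If Q |e| >= 1/4, some integer t with |t| <= 8 alpha Q moves t e into
   [alpha, 1/2]; this is how one gets steps of controlled size away from Z. *)
Lemma small_multiple_escape (alpha Q e : R) :
  0 < alpha <= /4 -> e <> 0 -> Rabs e <= /2 -> /4 <= Q * Rabs e -> 1 <= 4 * alpha * Q ->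
  exists t : Z, Rabs (IZR t) <= 8 * alpha * Q /\ alpha <= IZR t * e <= /2.
Proof.
  intros Ha He Hhalf HQ HQa.
  assert (Hy : 0 < Rabs e) by (apply Rabs_pos_lt; exact He).
  destruct (ceiling_multiple alpha (Rabs e) ltac:(lra) Hy) as [t [Ht1 Ht]].
  assert (Hbound : INR t <= 8 * alpha * Q).
  { assert (Hinv : / Rabs e <= 4 * Q).
    { apply Rmult_le_reg_r with (Rabs e); [lra|]. rewrite Rinv_l by lra. lra. }
    assert (INR t <= alpha / Rabs e + 1).
    { apply Rmult_le_reg_r with (Rabs e); [lra|].
      replace ((alpha / Rabs e + 1) * Rabs e) with (alpha + Rabs e) by (field; lra). lra. }
    unfold Rdiv in *. nra. }
  assert (Hhalf' : INR t * Rabs e <= /2).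
  { destruct (Nat.eq_dec t 1) as [-> | Hne1]; [simpl; lra|].
    assert (Ht2 : 2 <= INR t) by (replace 2 with (INR 2) by (simpl; ring); apply le_INR; lia).
    assert (Rabs e <= alpha) by nra. lra. }
  destruct (Rle_lt_dec 0 e) as [Hpos | Hneg].
  - exists (Z.of_nat t). rewrite <- INR_IZR_INZ, Rabs_pos_eq by apply pos_INR.
    rewrite Rabs_pos_eq in Ht, Hhalf' by lra. lra.
  - exists (- Z.of_nat t)%Z. rewrite opp_IZR, Rabs_Ropp, <- INR_IZR_INZ, Rabs_pos_eq by apply pos_INR.
    rewrite Rabs_left in Ht, Hhalf' by lra. lra.
Qed.

Lemma continuous_wrt_at0 {I : Type} (nb : I -> Z -> Prop) (theta : R) :
  continuous_wrt nb theta <->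
  (forall eps, 0 < eps -> exists i, forall v, nb i v -> near0_T eps (IZR v * theta)).
Proof.
  unfold continuous_wrt, chi. split.
  - intros H eps He. destruct (H 0%Z eps He) as [i Hi]. exists i. intros v Hv.
    specialize (Hi v Hv). rewrite Z.add_0_l, Rmult_0_l, Rminus_0_r in Hi. exact Hi.
  - intros H k eps He. destruct (H eps He) as [i Hi]. exists i. intros v Hv.
    rewrite plus_IZR. replace ((IZR k + IZR v) * theta - IZR k * theta) with (IZR v * theta) by ring.
    auto.
Qed.

Section DSequence.
Variable b : nat -> nat.
Hypothesis hb : D_sequence b.

Lemma b_pos (n : nat) : 0 < INR (b n).
Proof. destruct hb as [_ [H _]]. apply lt_0_INR, H. Qed.

Lemma b_succ_multiple (n : nat) : exists k : nat, b (S n) = (k * b n)%nat.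
Proof. destruct hb as [_ [_ [H _]]]. apply H. Qed.

Lemma b_divides (N M : nat) : (N <= M)%nat -> Nat.divide (b N) (b M).
Proof.
  induction 1 as [|M _ IH]; [apply Nat.divide_refl|].
  eapply Nat.divide_trans; [apply IH|]. apply hb.
Qed.

Lemma b_lt_succ (n : nat) : (b n < b (S n))%nat.
Proof.
  destruct hb as [_ [Hp [Hd Hne]]].
  pose proof (Nat.divide_pos_le _ _ (Hp (S n)) (Hd n)). specialize (Hne n). lia.
Qed.

Lemma b_mono (N M : nat) : (N <= M)%nat -> INR (b N) <= INR (b M).
Proof.
  intro H. apply le_INR. induction H as [|M _ IH]; [lia|]. pose proof (b_lt_succ M). lia.
Qed.

Lemma b_ge_index (n : nat) : INR (S n) <= INR (b n).
Proof.
  apply le_INR. induction n as [|n IH].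
  - destruct hb as [_ [H _]]. apply H.
  - pose proof (b_lt_succ n). lia.
Qed.

(* V_{b,m} is stable under adding t b_n when both v and t b_n are small
   compared with b_{n+1}: below index n+1 the term t b_n is a multiple of b_N,
   from index n+1 on both terms are at most b_N/(8m). *)
Lemma V_bm_extend (m n : nat) (v t : Z) : (1 <= m)%nat -> V_bm b m v ->
  Rabs (IZR v) <= INR (b (S n)) / (8 * INR m) ->
  Rabs (IZR t) * INR (b n) <= INR (b (S n)) / (8 * INR m) ->
  V_bm b m (v + t * Z.of_nat (b n)).
Proof.
  intros Hm Hv Hvs Hts N HN. pose proof (b_pos N) as HbN.
  assert (HmR : 1 <= INR m) by (apply (le_INR 1); exact Hm).
  destruct (Nat.le_gt_cases N n) as [HNn | HnN].
  - destruct (Hv N HN) as [w Hw]. destruct (b_divides N n HNn) as [d Hd].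
    exists (w + t * Z.of_nat d)%Z.
    replace (IZR (v + t * Z.of_nat (b n)) / INR (b N) - IZR (w + t * Z.of_nat d))
      with (IZR v / INR (b N) - IZR w); [exact Hw|].
    rewrite !plus_IZR, !mult_IZR, <- !INR_IZR_INZ, Hd, mult_INR. field. lra.
  - exists 0%Z. rewrite Rminus_0_r.
    assert (HnN' : INR (b (S n)) <= INR (b N)) by (apply b_mono; lia).
    unfold Rdiv. rewrite Rabs_mult, Rabs_inv, (Rabs_pos_eq (INR (b N))) by lra.
    apply Rmult_le_reg_r with (INR (b N)); [lra|]. rewrite Rmult_assoc, Rinv_l, Rmult_1_r by lra.
    rewrite plus_IZR, mult_IZR, <- INR_IZR_INZ.
    eapply Rle_trans; [apply Rabs_triang|].
    rewrite Rabs_mult, (Rabs_pos_eq (INR (b n))) by apply pos_INR.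
    assert (INR (b (S n)) / (8 * INR m) * 2 <= INR (b N) * / (4 * INR m)).
    { unfold Rdiv. rewrite Rinv_mult, Rinv_mult. apply Rmult_le_reg_r with (4 * INR m); [lra|].
      field_simplify; lra. }
    lra.
Qed.

End DSequence.

Definition b_rational (b : nat -> nat) (theta : R) : Prop :=
  exists (a : Z) (n : nat), (1 <= n)%nat /\
    exists z : Z, theta = IZR a / INR (b n) + IZR z.

(* If b_n theta is an integer, theta is b-rational (for n = 0 take a = 0). *)
Lemma b_rational_of_integer_multiple (b : nat -> nat) (hb : D_sequence b) (theta : R) (n : nat) :
  residual (INR (b n) * theta) = 0 -> b_rational b theta.
Proof.
  unfold residual. set (w := nearest (INR (b n) * theta)). intro H.
  pose proof (b_pos b hb n). pose proof (b_pos b hb 1).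
  destruct n as [|n].
  - exists 0%Z, 1%nat. split; [lia|]. exists w.
    destruct hb as [Hb0 _]. rewrite Hb0 in H. simpl in H. unfold Rdiv. lra.
  - exists w, (S n). split; [lia|]. exists 0%Z.
    replace (IZR w) with (INR (b (S n)) * theta) by lra. simpl. field. lra.
Qed.

(* A b-rational character kills b_n Z. *)
Lemma b_rational_lambda (b : nat -> nat) (hb : D_sequence b) (theta : R) :
  b_rational b theta -> lambda_continuous b theta.
Proof.
  intros [a [n [_ [z Hz]]]]. apply continuous_wrt_at0.
  intros eps He. exists n. intros v [q ->].
  replace (IZR (Z.of_nat (b n) * q) * theta) with (IZR (q * a + Z.of_nat (b n) * q * z)).
  - apply near0_T_int, He.
  - pose proof (b_pos b hb n). rewrite Hz, !plus_IZR, !mult_IZR, <- INR_IZR_INZ. field. lra.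
Qed.

(* A b-rational character moves V_{b,m} by at most |a|/(4m). *)
Lemma b_rational_tau (b : nat -> nat) (hb : D_sequence b) (theta : R) :
  b_rational b theta -> tau_continuous b theta.
Proof.
  intros [a [n [Hn [z Hz]]]]. apply continuous_wrt_at0.
  intros eps He.
  destruct (archimedean_nat ((Rabs (IZR a) + 1) / (4 * eps))) as [j Hj].
  assert (Hm : Rabs (IZR a) < 4 * eps * INR (S j)).
  { rewrite S_INR. apply Rmult_lt_compat_l with (r := 4 * eps) in Hj; [|lra].
    replace (4 * eps * ((Rabs (IZR a) + 1) / (4 * eps))) with (Rabs (IZR a) + 1) in Hj
      by (field; lra). lra. }
  exists j. intros v Hv. destruct (Hv n Hn) as [w Hw].
  pose proof (b_pos b hb n). pose proof (lt_0_INR (S j) (Nat.lt_0_succ j)).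
  replace (IZR v * theta) with (IZR a * (IZR v / INR (b n) - IZR w) + IZR (a * w + v * z)).
  2:{ rewrite Hz, plus_IZR, !mult_IZR. field. lra. }
  apply near0_T_shift. exists 0%Z. rewrite Rminus_0_r, Rabs_mult.
  apply Rle_lt_trans with (Rabs (IZR a) * / (4 * INR (S j))).
  - apply Rmult_le_compat_l; [apply Rabs_pos | exact Hw].
  - apply Rmult_lt_reg_r with (4 * INR (S j)); [lra|].
    rewrite Rmult_assoc, Rinv_l by lra. lra.
Qed.

(* A lambda_b-continuous character is b-rational: on b_n Z it stays within 1/4
   of 0, so b_n theta is an integer. *)
Lemma lambda_b_rational (b : nat -> nat) (hb : D_sequence b) (theta : R) :
  lambda_continuous b theta -> b_rational b theta.
Proof.
  intro H. unfold lambda_continuous in H. rewrite continuous_wrt_at0 in H.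
  destruct (H (/4) ltac:(lra)) as [n Hn].
  apply (b_rational_of_integer_multiple b hb theta n), multiples_near0_integer.
  intro q. rewrite <- Rmult_assoc, (Rmult_comm (IZR q)), INR_IZR_INZ, <- mult_IZR.
  apply Hn. exists q. reflexivity.
Qed.

Section TauContinuousIsRational.
Variables (b : nat -> nat) (theta : R).
Hypotheses (hb : D_sequence b) (hr : ratio_to_infty b).
Hypothesis hnot : forall n, residual (INR (b n) * theta) <> 0.

Local Notation e n := (residual (INR (b n) * theta)).
Local Notation q n := (INR (b (S n)) / INR (b n)).

(* While q n |e n| < 1/2, the residual is multiplied by q n >= 1. *)
Lemma residual_step (n : nat) :
  q n * Rabs (e n) < /2 -> Rabs (e n) <= Rabs (e (S n)).
Proof.
  intro Hsmall. destruct (b_succ_multiple b hb n) as [k Hk].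
  pose proof (b_pos b hb n). pose proof (b_mono b hb n (S n) (le_S _ _ (le_n n))).
  assert (Hq : q n = INR k).
  { rewrite Hk, mult_INR. field. lra. }
  assert (Hk1 : 1 <= INR k).
  { rewrite <- Hq. apply Rmult_le_reg_r with (INR (b n)); [lra|].
    replace (q n * INR (b n)) with (INR (b (S n))) by (field; lra). lra. }
  assert (Hmul : Rabs (INR k * e n) < /2)
    by (rewrite Rabs_mult, (Rabs_pos_eq (INR k)), <- Hq; lra).
  rewrite Hk, mult_INR, Rmult_assoc, (residual_mul k _ Hmul), Rabs_mult, (Rabs_pos_eq (INR k)) by lra.
  pose proof (Rabs_pos (e n)). nra.
Qed.

(* Infinitely often q n |e n| >= 1/4: otherwise |e n| would be bounded below
   by a positive constant, contradicting q n -> oo. *)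
Lemma ratio_residual_unbounded (N0 : nat) :
  exists n, (N0 <= n)%nat /\ /4 <= q n * Rabs (e n).
Proof.
  apply NNPP. intro Hnone.
  assert (Hsmall : forall n, (N0 <= n)%nat -> q n * Rabs (e n) < /4).
  { intros n Hn. apply Rnot_le_lt. intro H. apply Hnone. eauto. }
  set (E := Rabs (e N0)).
  assert (HE : 0 < E) by (apply Rabs_pos_lt, hnot).
  assert (Hgrow : forall k, E <= Rabs (e (N0 + k)%nat)).
  { induction k as [|k IH]; [rewrite Nat.add_0_r; unfold E; lra|].
    rewrite <- plus_n_Sm. eapply Rle_trans; [exact IH|].
    apply residual_step. pose proof (Hsmall (N0 + k)%nat ltac:(lia)). lra. }
  destruct (hr (/ (4 * E))) as [N HN].
  specialize (HN (N0 + N)%nat ltac:(lia)). specialize (Hgrow N).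
  specialize (Hsmall (N0 + N)%nat ltac:(lia)).
  assert (/ (4 * E) * E = /4) by (field; lra).
  assert (0 < / (4 * E)) by (apply Rinv_0_lt_compat; lra).
  nra.
Qed.

Lemma escape_step (M : R) (n : nat) : 1 <= M -> 16 * M <= q n -> /4 <= q n * Rabs (e n) ->
  exists t : Z, Rabs (IZR t) * INR (b n) <= INR (b (S n)) / (8 * M) /\
  exists (u : R) (z : Z), / (64 * M) <= u <= /2 /\ IZR t * INR (b n) * theta = u + IZR z.
Proof.
  intros HM Hq Hqe. pose proof (b_pos b hb n).
  assert (Halpha : 0 < / (64 * M) <= /4).
  { split; [apply Rinv_0_lt_compat; lra|]. apply Rinv_le_contravar; lra. }
  destruct (small_multiple_escape (/ (64 * M)) (q n) (e n) Halpha (hnot n) (residual_bound _) Hqe)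
    as [t [Ht Hte]].
  { replace (4 * / (64 * M) * q n) with (q n / (16 * M)) by (field; lra).
    apply Rmult_le_reg_r with (16 * M); [lra|]. field_simplify; lra. }
  exists t. split.
  - replace (INR (b (S n)) / (8 * M)) with (8 * / (64 * M) * q n * INR (b n)) by (field; lra).
    apply Rmult_le_compat_r; lra.
  - exists (IZR t * e n), (t * nearest (INR (b n) * theta))%Z. split; [exact Hte|].
    unfold residual. rewrite mult_IZR. ring.
Qed.

(* Iterating escape_step at ever larger indices: after i steps some v in V_{b,m}
   has v theta = s mod Z with s in [1/4, 3/4] or s >= i/(64m). *)
Lemma quarter_turn_by_steps (m : nat) : (1 <= m)%nat -> forall i : nat,
  exists v : Z, V_bm b m v /\ exists (s : R) (z : Z), IZR v * theta = s + IZR z /\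
    (/4 <= s <= 3/4 \/ INR i / (64 * INR m) <= s < /4).
Proof.
  intros Hm. assert (HmR : 1 <= INR m) by (apply (le_INR 1); exact Hm).
  induction i as [|i IH].
  - exists 0%Z. split.
    + intros N _. exists 0%Z. unfold Rdiv. rewrite Rmult_0_l, Rminus_0_r, Rabs_R0.
      left. apply Rinv_0_lt_compat. lra.
    + exists 0, 0%Z. split; [simpl; ring|]. right. simpl. unfold Rdiv. lra.
  - destruct IH as [v [Hv [s [z [Hz [Hdone | Hlow]]]]]].
    { exists v. split; [exact Hv|]. exists s, z. auto. }
    destruct (hr (16 * INR m)) as [N1 HN1].
    destruct (archimedean_nat (8 * INR m * Rabs (IZR v))) as [N2 HN2].
    destruct (ratio_residual_unbounded (N1 + N2)) as [n [Hn Hqe]].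
    assert (Hq : 16 * INR m <= INR (b (S n)) / INR (b n)) by (specialize (HN1 n ltac:(lia)); lra).
    destruct (escape_step (INR m) n HmR Hq Hqe) as [t [Ht [u [z' [Hu Huz]]]]].
    exists (v + t * Z.of_nat (b n))%Z. split.
    + apply V_bm_extend; auto.
      assert (HN2n : INR N2 <= INR (b (S n))).
      { apply Rle_trans with (INR (S (S n))); [apply le_INR; lia | apply b_ge_index, hb]. }
      apply Rmult_le_reg_r with (8 * INR m); [lra|].
      unfold Rdiv. rewrite Rmult_assoc, Rinv_l, Rmult_1_r by lra. lra.
    + exists (s + u), (z + z')%Z. split.
      * rewrite plus_IZR, mult_IZR, <- INR_IZR_INZ, plus_IZR, Rmult_plus_distr_r, Hz, Huz. ring.
      * rewrite S_INR. unfold Rdiv in *.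
        destruct (Rlt_le_dec (s + u) (/4)); [right | left]; nra.
Qed.

End TauContinuousIsRational.

(* A tau_b-continuous character is b-rational: otherwise 16m steps give v in
   V_{b,m} with v theta at distance >= 1/4 from Z. *)
Lemma tau_b_rational (b : nat -> nat) (hb : D_sequence b) (hr : ratio_to_infty b) (theta : R) :
  tau_continuous b theta -> b_rational b theta.
Proof.
  intro Ht. apply NNPP. intro Hnot.
  assert (hnot : forall n, residual (INR (b n) * theta) <> 0)
    by (intros n Hn; exact (Hnot (b_rational_of_integer_multiple b hb theta n Hn))).
  unfold tau_continuous in Ht. rewrite continuous_wrt_at0 in Ht.
  destruct (Ht (/4) ltac:(lra)) as [j Hj].
  destruct (quarter_turn_by_steps b theta hb hr hnot (S j) ltac:(lia) (16 * S j))
    as [v [Hv [s [z [Hz [Hfar | Hlow]]]]]].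
  - apply (not_near0_quarter s z Hfar). rewrite <- Hz. exact (Hj v Hv).
  - pose proof (lt_0_INR (S j) (Nat.lt_0_succ j)).
    rewrite mult_INR in Hlow. replace (INR 16) with 16 in Hlow by (simpl; ring).
    replace (16 * INR (S j) / (64 * INR (S j))) with (/4) in Hlow by (field; lra). lra.
Qed.

Theorem theorem4p4 (b : nat -> nat) (hb : D_sequence b) (hr : ratio_to_infty b)
  (theta : R) :
  (tau_continuous b theta <-> lambda_continuous b theta) /\
  (lambda_continuous b theta <->
     exists (a : Z) (n : nat), (1 <= n)%nat /\
       exists z : Z, theta = IZR a / INR (b n) + IZR z).
Proof.
  split; split; intro H.
  - apply b_rational_lambda, tau_b_rational; assumption.
  - apply b_rational_tau, lambda_b_rational; assumption.
  - apply lambda_b_rational; assumption.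
  - apply b_rational_lambda; assumption.
Qed.
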